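(* Let $0<a,b<1$, $r>as$, $s>br$, let $(\xi_n)$, $(\chi_n)$ satisfy Assumption 1, and let $\alpha,\beta\in[0,1)$, $\ell\in[0,\min\{\alpha,1-\alpha\})$, $\bar\ell\in[0,\min\{\beta,1-\beta\})$. Suppose there exist $\lambda\in(0,1)$ and a norm on $\mathbb R^2$ (with induced matrix norm $\|\cdot\|$) such that for every $n\in\mathbb N$, almost surely, $\|J_{\alpha+\ell\xi_n,\beta+\bar\ell\chi_n}\|\le\lambda$. Then there is $\delta_0>0$ such that every solution $(x_n,y_n)$ of $$x_{n+1}=x_n[(1-\alpha-\ell\xi_{n+1})e^{r-x_n-ay_n}+\alpha+\ell\xi_{n+1}],\quad y_{n+1}=y_n[(1-\beta-\bar\ell\chi_{n+1})e^{s-bx_n-y_n}+\beta+\bar\ell\chi_{n+1}]$$ with $(x_0,y_0)\in B(K,\delta_0)$ satisfies $\lim_{n\to\infty}(x_n,y_n)=K$ almost surely.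
   Context: $p=\frac{r-as}{1-ab}$, $q=\frac{s-br}{1-ab}$, $K=(p,q)$; $J_{\alpha,\beta}=\begin{pmatrix}1-(1-\alpha)p & -a(1-\alpha)p\\ -b(1-\beta)q & 1-(1-\beta)q\end{pmatrix}$. Assumption 1: on a probability space, $(\xi_n)_{n\in\mathbb N}$ and $(\chi_n)_{n\in\mathbb N}$ are mutually independent sequences, each consisting of independent identically distributed random variables, with $|\xi_n|\le1$, $|\chi_n|\le1$ for all $n$. *)

From HB Require Import structures.
From mathcomp Require Import all_boot all_order all_algebra.
From mathcomp Require Import all_classical all_reals all_analysis.
Set Implicit Arguments. Unset Strict Implicit. Unset Printing Implicit Defensive.
Import Order.TTheory GRing.Theory Num.Theory.
Import numFieldNormedType.Exports.
Local Open Scope classical_set_scope.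
Local Open Scope ring_scope.

Definition mutually_independent d (T : measurableType d) (R : realType)
  (P : probability T R) (I : eqType) (X : I -> T -> R) : Prop :=
  forall (J : seq I) (B : I -> set R), uniq J ->
    (forall i, measurable (B i)) ->
    P (\bigcap_(i in [set` J]) (X i @^-1` B i)) =
    (\prod_(i <- J) P (X i @^-1` B i))%E.

Definition identically_distributed d (T : measurableType d) (R : realType)
  (P : probability T R) (X : nat -> T -> R) : Prop :=
  forall n (B : set R), measurable B -> P (X n @^-1` B) = P (X 0%N @^-1` B).

Definition assumption1 d (T : measurableType d) (R : realType)
  (P : probability T R) (xi chi : nat -> T -> R) : Prop :=
  [/\ forall n, measurable_fun setT (xi n),
      forall n, measurable_fun setT (chi n),
      mutually_independent P
        (fun k : nat + nat => match k with inl n => xi n | inr n => chi n end),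
      identically_distributed P xi /\ identically_distributed P chi &
      forall n t, `|xi n t| <= 1 /\ `|chi n t| <= 1].

Definition is_norm (R : realType) (N : 'cV[R]_2 -> R) : Prop :=
  [/\ forall v, 0 <= N v,
      forall v, N v = 0 -> v = 0,
      forall (c : R) v, N (c *: v) = `|c| * N v &
      forall u v, N (u + v) <= N u + N v].

Definition opnorm (R : realType) (N : 'cV[R]_2 -> R) (A : 'M[R]_2) : R :=
  sup [set N (A *m v) | v in [set v | N v = 1]].

Definition Kp (R : realType) (a b r s : R) : R := (r - a * s) / (1 - a * b).
Definition Kq (R : realType) (a b r s : R) : R := (s - b * r) / (1 - a * b).

Definition Jmat (R : realType) (a b r s al be : R) : 'M[R]_2 :=
  let p := Kp a b r s in let q := Kq a b r s in
  \matrix_(i < 2, j < 2)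
    if (i : nat) == 0%N then
      (if (j : nat) == 0%N then 1 - (1 - al) * p else - a * (1 - al) * p)
    else
      (if (j : nat) == 0%N then - b * (1 - be) * q else 1 - (1 - be) * q).

From HB Require Import structures.
From mathcomp Require Import all_boot all_order all_algebra.
From mathcomp Require Import all_classical all_reals all_analysis.
From mathcomp Require Import ring lra.
Import Order.TTheory GRing.Theory Num.Theory.
Import numFieldNormedType.Exports.
Local Open Scope classical_set_scope.
Local Open Scope ring_scope.
Set Implicit Arguments. Unset Strict Implicit. Unset Printing Implicit Defensive.

(** For almost every noise path the system is a deterministic nonautonomous
    map whose Jacobians [J_n] at the equilibrium [K] are [lam]-contractions
    for the operator norm of [N].  Since [e^w = 1 + w + O(w^2)] and the
    weights [1 - al_n], [1 - be_n] stay in [[0, 1]], the deviation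
    [z_n = (x_n, y_n) - K] satisfies [N z_(n+1) <= lam N z_n + C N z_n ^ 2]
    with [C] independent of [n], hence contracts at the rate [(1 + lam) / 2]
    in a small [N]-ball around [K], which is uniform in the noise. *)

Lemma lipschitz_continuous (R : realType) (f : R -> R) (k : R) : 0 < k ->
  (forall x y, `|f x - f y| <= k * `|x - y|) -> continuous f.
Proof.
move=> k0 fk x; apply/cvgrPdist_le => e e0.
have ek0 : 0 < e / k by rewrite divr_gt0.
have near_x := (cvgrPdist_le _ _).1 (@cvg_id _ (nbhs x)) _ ek0.
near=> y; apply: le_trans (fk _ _) _.
have xy : `|x - y| <= e / k by near: y; exact: near_x.
by rewrite mulrC -ler_pdivlMr.
Unshelve. all: by end_near.
Qed.

Definition col2 (R : Type) (u v : R) : 'cV[R]_2 :=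
  \col_(i < 2) (if (i : nat) == 0%N then u else v).

Lemma col2E (R : Type) (w : 'cV[R]_2) : w = col2 (w 0 0) (w 1 0).
Proof.
apply/matrixP => i j; rewrite !mxE (ord1 j).
by case: i => [[|[|//]] ?] /=; congr (w _ _); apply: val_inj.
Qed.

Section Col2.
Variable R : pzRingType.
Implicit Types u v c : R.

Lemma col2_basis u v : col2 u v = u *: col2 1 0 + v *: col2 0 1.
Proof.
by apply/matrixP => i j; rewrite !mxE; case: ifP; rewrite ?mulr1 ?mulr0 ?addr0 ?add0r.
Qed.

Lemma col2B u v u' v' : col2 u v - col2 u' v' = col2 (u - u') (v - v').
Proof. by apply/matrixP => i j; rewrite !mxE; case: ifP. Qed.

Lemma scale_col2 c u v : c *: col2 u v = col2 (c * u) (c * v).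
Proof. by apply/matrixP => i j; rewrite !mxE; case: ifP. Qed.

Lemma col2_eq0 u v : (col2 u v == 0) = (u == 0) && (v == 0).
Proof.
apply/eqP/andP => [/matrixP uv0 | [/eqP-> /eqP->]].
  by split; apply/eqP; [move: (uv0 0 0) | move: (uv0 1 0)]; rewrite !mxE.
by apply/matrixP => i j; rewrite !mxE; case: ifP.
Qed.

Lemma mulmx_col2 (A : 'M[R]_2) u v :
  A *m col2 u v = col2 (A 0 0 * u + A 0 1 * v) (A 1 0 * u + A 1 1 * v).
Proof.
apply/matrixP => i j; rewrite !mxE !big_ord_recl big_ord0 addr0 !mxE /=.
have -> : lift ord0 ord0 = 1 :> 'I_2 by apply: val_inj.
by case: i => [[|[|//]] Hi]; congr (A _ _ * _ + A _ _ * _); apply: val_inj.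
Qed.

End Col2.

Section IsNorm.
Variables (R : realType) (N : 'cV[R]_2 -> R).
Hypothesis hN : is_norm N.

Lemma isnorm_ge0 w : 0 <= N w. Proof. by case: hN. Qed.
Lemma isnormZ c w : N (c *: w) = `|c| * N w. Proof. by case: hN. Qed.
Lemma ler_isnormD u w : N (u + w) <= N u + N w. Proof. by case: hN. Qed.

Lemma isnorm_gt0 w : w != 0 -> 0 < N w.
Proof.
move=> w0; rewrite lt_def isnorm_ge0 andbT.
by apply: contra w0 => /eqP; case: hN => _ h _ _ /h ->.
Qed.

Lemma isnorm0 : N 0 = 0.
Proof. by rewrite -(scale0r (0 : 'cV[R]_2)) isnormZ normr0 mul0r. Qed.

Lemma isnormN w : N (- w) = N w.
Proof. by rewrite -scaleN1r isnormZ normrN normr1 mul1r. Qed.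

Lemma ler_dist_isnorm u w : `|N u - N w| <= N (u - w).
Proof.
rewrite ler_norml; apply/andP; split.
  have := ler_isnormD (w - u) u; rewrite subrK -opprB isnormN; lra.
have := ler_isnormD (u - w) w; rewrite subrK; lra.
Qed.

Lemma ler_isnorm_comb (e f : 'cV[R]_2) u v :
  N (u *: e + v *: f) <= `|u| * N e + `|v| * N f.
Proof. by rewrite -!isnormZ; apply: ler_isnormD. Qed.

Lemma ler_isnorm_col2 u v :
  N (col2 u v) <= `|u| * N (col2 1 0) + `|v| * N (col2 0 1).
Proof. by rewrite col2_basis; apply: ler_isnorm_comb. Qed.

Lemma isnorm_col2_lt_sqr u v d : 0 < d -> u ^+ 2 + v ^+ 2 < d ^+ 2 ->
  N (col2 u v) <= d * (N (col2 1 0) + N (col2 0 1)).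
Proof.
move=> d0 uvd; apply: le_trans (ler_isnorm_col2 u v) _.
have hu : `|u| <= d by rewrite ler_norml; apply/andP; split; have := sqr_ge0 v; nra.
have hv : `|v| <= d by rewrite ler_norml; apply/andP; split; have := sqr_ge0 u; nra.
by rewrite mulrDr; apply: lerD; apply: ler_wpM2r => //; exact: isnorm_ge0.
Qed.

Lemma isnorm_col2_basis_gt0 : 0 < N (col2 1 0) + N (col2 0 1).
Proof.
have e1_neq0 : col2 1 0 != 0 :> 'cV[R]_2 by rewrite col2_eq0 oner_eq0.
have := isnorm_gt0 e1_neq0; have := isnorm_ge0 (col2 0 1); lra.
Qed.

Lemma isnorm_segment_min (e f : 'cV[R]_2) : (forall t, e + t *: f != 0) ->
  exists2 m, 0 < m & forall t, -1 <= t <= 1 -> m <= N (e + t *: f).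
Proof.
move=> ef0.
have k0 : 0 < N f + 1 by have := isnorm_ge0 f; lra.
have cont : continuous (fun t : R => N (e + t *: f)).
  apply: (lipschitz_continuous k0) => x y.
  apply: le_trans (ler_dist_isnorm _ _) _.
  rewrite opprD addrACA subrr add0r -scalerBl isnormZ.
  have := isnorm_ge0 f; have := normr_ge0 (x - y); nra.
have le_m11 : (-1 : R) <= 1 by lra.
have [c _ cmin] := EVT_min le_m11 (continuous_subspaceT cont).
exists (N (e + c *: f)); first exact: isnorm_gt0.
by move=> t t1; apply: cmin; rewrite in_itv.
Qed.

Lemma isnorm_col2_ge : exists2 m, 0 < m & forall u v, m * (`|u| + `|v|) <= N (col2 u v).
Proof.
have col2_1t (t : R) : col2 1 0 + t *: col2 0 1 = col2 1 t.
  by rewrite [col2 1 t]col2_basis scale1r.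
have col2_t1 (t : R) : col2 0 1 + t *: col2 1 0 = col2 t 1.
  by rewrite [col2 t 1]col2_basis scale1r addrC.
have [|m1 m10 m1P] := @isnorm_segment_min (col2 1 0) (col2 0 1).
  by move=> t; rewrite col2_1t col2_eq0 oner_eq0.
have [|m2 m20 m2P] := @isnorm_segment_min (col2 0 1) (col2 1 0).
  by move=> t; rewrite col2_t1 col2_eq0 oner_eq0 andbF.
exists (Num.min m1 m2 / 2); first by rewrite divr_gt0 // lt_min m10 m20.
have hm1 : Num.min m1 m2 <= m1 by rewrite ge_min lexx.
have hm2 : Num.min m1 m2 <= m2 by rewrite ge_min lexx orbT.
move=> u v; have nu := normr_ge0 u; have nv := normr_ge0 v.
have [vu|uv] := lerP `|v| `|u|.
- have [u0|u0] := eqVneq u 0.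
    move: vu; rewrite u0 normr0 normr_le0 => /eqP ->.
    by rewrite normr0 addr0 mulr0 isnorm_ge0.
  have -> : col2 u v = u *: col2 1 (v / u) by rewrite scale_col2 mulr1 mulrCA divff // mulr1.
  have t1 : -1 <= v / u <= 1.
    by rewrite -ler_norml normf_div ler_pdivrMr ?normr_gt0 // mul1r.
  rewrite isnormZ; have := m1P _ t1; rewrite col2_1t; have := isnorm_ge0 (col2 1 (v / u)); nra.
- have v0 : v != 0 by rewrite -normr_gt0; apply: le_lt_trans uv.
  have -> : col2 u v = v *: col2 (u / v) 1 by rewrite scale_col2 mulr1 mulrCA divff // mulr1.
  have t1 : -1 <= u / v <= 1.
    by rewrite -ler_norml normf_div ler_pdivrMr ?normr_gt0 // mul1r ltW.
  rewrite isnormZ; have := m2P _ t1; rewrite col2_t1; have := isnorm_ge0 (col2 (u / v) 1); nra.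
Qed.

Lemma isnorm_mulmx_bounded (A : 'M[R]_2) : exists B, forall w, N (A *m w) <= B * N w.
Proof.
have [m m0 mP] := isnorm_col2_ge.
set C := N (A *m col2 1 0) + N (A *m col2 0 1).
exists (C / m) => w; rewrite [w]col2E; set u := w 0 0; set v := w 1 0.
rewrite col2_basis mulmxDr -!scalemxAr -col2_basis.
apply: le_trans (ler_isnorm_comb _ _ _ _) _.
have hC : 0 <= C by rewrite addr_ge0 ?isnorm_ge0.
have uvN : `|u| + `|v| <= N (col2 u v) / m by rewrite ler_pdivlMr // mulrC.
apply: (@le_trans _ _ (C * (`|u| + `|v|))); last first.
  by rewrite mulrAC -mulrA ler_wpM2l.
have := isnorm_ge0 (A *m col2 1 0); have := isnorm_ge0 (A *m col2 0 1).
have := normr_ge0 u; have := normr_ge0 v; rewrite /C; nra.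
Qed.

Lemma opnorm_le (A : 'M[R]_2) w : N (A *m w) <= opnorm N A * N w.
Proof.
have [B AB] := isnorm_mulmx_bounded A.
have [->|w0] := eqVneq w 0; first by rewrite mulmx0 isnorm0 mulr0.
have Nw0 := isnorm_gt0 w0.
pose w1 := (N w)^-1 *: w.
have Nw_inv : `|(N w)^-1| = (N w)^-1 by rewrite ger0_norm // invr_ge0 ltW.
have w1_unit : N w1 = 1 by rewrite isnormZ Nw_inv mulVf // gt_eqF.
have hs : has_sup [set N (A *m v) | v in [set v | N v = 1]].
  split; first by exists (N (A *m w1)), w1.
  by exists B => _ [v /= v1 <-]; rewrite -[B]mulr1 -v1.
have := sup_upper_bound hs (ex_intro2 _ _ w1 w1_unit erefl).
rewrite -scalemxAr isnormZ Nw_inv => sup_ge.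
by rewrite /opnorm -ler_pdivrMr // mulrC.
Qed.

End IsNorm.

Lemma expR_sub1_bounds (R : realType) (w : R) : `|w| <= 1/2 ->
  `|expR w - 1 - w| <= 2 * w ^+ 2 /\ `|expR w - 1| <= 2 * `|w|.
Proof.
move=> w_small.
have lower := expR_ge1Dx w.
have upper := expR_ge1Dx (- w); rewrite expRN in upper.
have E0 := expR_gt0 w.
set E := expR w in lower upper E0 *.
have upperE : (1 - w) * E <= 1 by move: upper; rewrite -ler_pdivlMr // div1r.
have hw : - (1/2) <= w <= 1/2 by rewrite -ler_norml.
have rem0 : 0 <= E - 1 - w by lra.
have rem2 : E - 1 - w <= 2 * w ^+ 2 by rewrite expr2; nra.
split; first by rewrite ger0_norm.
have := ler_normD (E - 1 - w) w; rewrite subrK (ger0_norm rem0).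
have : 2 * w ^+ 2 <= `|w|.
  rewrite -(real_normK (num_real w)) expr2; have := normr_ge0 w; nra.
lra.
Qed.

Definition ricker_factor (R : realType) (al g : R) := (1 - al) * expR g + al.

(* With [x = p + u], [y = q + v] and [p + c q = r], the exponent [r - x - c y]
   is [- (u + c v)]: this is the first-order expansion of
   [x |-> x * ricker_factor al (r - x - c y)] around the equilibrium. *)
Lemma ricker_remainder (R : realType) (p c al u v : R) :
  0 <= 1 - al <= 1 -> `|c| <= 1 -> `|u| + `|v| <= 1/2 ->
  `|(p + u) * ricker_factor al (- (u + c * v)) - p
     - ((1 - (1 - al) * p) * u + (- c * (1 - al) * p) * v)|
  <= 2 * (`|p| + 1) * (`|u| + `|v|) ^+ 2.
Proof.
move=> /andP[al0 al1] c1 S_small; set w := - (u + c * v); set S := `|u| + `|v|.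
have wS : `|w| <= S.
  rewrite normrN; apply: le_trans (ler_normD _ _) _.
  rewrite lerD2l normrM; have := normr_ge0 v; have := normr_ge0 c; nra.
have [e1 e2] := expR_sub1_bounds (le_trans wS S_small).
have -> : (p + u) * ricker_factor al w - p
     - ((1 - (1 - al) * p) * u + (- c * (1 - al) * p) * v)
     = (1 - al) * (p * (expR w - 1 - w) + u * (expR w - 1)).
  by rewrite /ricker_factor /w; ring.
rewrite normrM (ger0_norm al0).
have S0 : 0 <= S by rewrite addr_ge0.
have uS : `|u| <= S by rewrite /S lerDl.
have w2S : w ^+ 2 <= S ^+ 2.
  by rewrite -(real_normK (num_real w)) !expr2; have := normr_ge0 w; nra.
have t1 : `|p| * `|expR w - 1 - w| <= `|p| * (2 * S ^+ 2).
  by apply: ler_wpM2l => //; apply: le_trans e1 _; lra.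
have t2 : `|u| * `|expR w - 1| <= S * (2 * S).
  apply: le_trans (ler_wpM2l (normr_ge0 u) e2) _.
  by have := normr_ge0 u; rewrite expr2 in w2S; nra.
have remainder_le :
    `|p * (expR w - 1 - w) + u * (expR w - 1)| <= 2 * (`|p| + 1) * S ^+ 2.
  apply: le_trans (ler_normD _ _) _; rewrite !normrM.
  have := normr_ge0 p; rewrite expr2 in t1 *; nra.
apply: le_trans (ler_wpM2r (normr_ge0 _) al1) _.
by rewrite mul1r.
Qed.

Lemma Kp_Kq_equilibrium (R : realType) (a b r s : R) : a * b != 1 ->
  Kp a b r s + a * Kq a b r s = r /\ b * Kp a b r s + Kq a b r s = s.
Proof.
move=> ab1; have ab0 : 1 - a * b != 0 by rewrite subr_eq0 eq_sym.
by rewrite /Kp /Kq; split; field.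
Qed.

Lemma geometric_cvg0 (R : realType) (u : R^nat) (eta rho : R) :
  0 <= rho < 1 -> (forall n, 0 <= u n) -> u 0%N <= eta ->
  (forall n, u n <= eta -> u n.+1 <= rho * u n) -> u @ \oo --> 0.
Proof.
move=> /andP[rho0 rho1] u0 u0_eta u_step.
have u_le n : u n <= rho ^+ n * u 0%N.
  elim: n => [|n IHn]; first by rewrite expr0 mul1r.
  have un_eta : u n <= eta.
    apply: le_trans IHn (le_trans _ u0_eta).
    by rewrite ler_piMl ?u0 // exprn_ile1 // ltW.
  apply: le_trans (u_step n un_eta) _.
  by rewrite exprS -mulrA ler_wpM2l.
apply: (@squeeze_cvgr _ _ _ _ (cst 0) (fun n => rho ^+ n * u 0%N)).
- by near=> n; rewrite u0 u_le.
- exact: cvg_cst.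
- rewrite -(mul0r (u 0%N)); apply: cvgM; last exact: cvg_cst.
  by apply: cvg_expr; rewrite ger0_norm.
Unshelve. all: by end_near.
Qed.

Lemma perturbed_weight_bounds (R : realType) (al l z : R) :
  0 <= l < Num.min al (1 - al) -> `|z| <= 1 -> 0 <= 1 - (al + l * z) <= 1.
Proof.
case/andP=> l0; rewrite lt_min => /andP[l_al l_1al] z1.
have : `|l * z| <= l by rewrite normrM ger0_norm //; have := normr_ge0 z; nra.
by rewrite ler_norml => /andP[? ?]; apply/andP; split; lra.
Qed.

Section LocalStability.
Variables (R : realType) (a b r s : R) (N : 'cV[R]_2 -> R).
Hypotheses (ha : 0 < a < 1) (hb : 0 < b < 1) (hN : is_norm N).

Local Notation p := (Kp a b r s).
Local Notation q := (Kq a b r s).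

Definition deviation (x y : R) : 'cV[R]_2 := col2 (x - p) (y - q).

Lemma deviation_step_le (al be lam x y : R) :
  0 <= 1 - al <= 1 -> 0 <= 1 - be <= 1 -> opnorm N (Jmat a b r s al be) <= lam ->
  `|x - p| + `|y - q| <= 1/2 ->
  N (deviation (x * ricker_factor al (r - x - a * y))
               (y * ricker_factor be (s - b * x - y)))
  <= lam * N (deviation x y)
     + 2 * (`|p| + `|q| + 1) * (N (col2 1 0) + N (col2 0 1))
       * (`|x - p| + `|y - q|) ^+ 2.
Proof.
move=> hal hbe Jlam S_small.
have ab1 : a * b != 1.
  by rewrite lt_eqF //; case/andP: ha => *; case/andP: hb => *; nra.
have [eq_r eq_s] := Kp_Kq_equilibrium r s ab1.
set J := Jmat a b r s al be in Jlam.
set z := deviation x y; set z' := deviation _ _.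
have -> : z' = J *m z + (z' - J *m z) by rewrite addrC subrK.
apply: le_trans (ler_isnormD hN _ _) _; apply: lerD.
  by apply: le_trans (opnorm_le hN J z) _; rewrite ler_wpM2r ?isnorm_ge0.
rewrite /z' /z /deviation mulmx_col2 col2B /J !mxE /=.
apply: le_trans (ler_isnorm_col2 hN _ _) _.
have a1 : `|a| <= 1 by rewrite ger0_norm; case/andP: ha => *; lra.
have b1 : `|b| <= 1 by rewrite ger0_norm; case/andP: hb => *; lra.
have remx := ricker_remainder p hal a1 S_small.
have S_small' : `|y - q| + `|x - p| <= 1/2 by rewrite addrC.
have remy := ricker_remainder q hbe b1 S_small'.
rewrite [`|y - q| + _]addrC in remy.
have -> : x * ricker_factor al (r - x - a * y) = (p + (x - p))
    * ricker_factor al (- ((x - p) + a * (y - q))).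
  by rewrite -[in r - _]eq_r; congr (_ * ricker_factor _ _); ring.
have -> : y * ricker_factor be (s - b * x - y) = (q + (y - q))
    * ricker_factor be (- ((y - q) + b * (x - p))).
  by rewrite -[in s - _]eq_s; congr (_ * ricker_factor _ _); ring.
rewrite [- b * _ * _ * (x - p) + _]addrC.
set S := `|x - p| + `|y - q| in remx remy *.
set C := 2 * (`|p| + `|q| + 1).
have CS : 2 * (`|p| + 1) * S ^+ 2 <= C * S ^+ 2 /\ 2 * (`|q| + 1) * S ^+ 2 <= C * S ^+ 2.
  by rewrite /C; have := sqr_ge0 S; have := normr_ge0 p; have := normr_ge0 q; split; nra.
have -> : C * (N (col2 1 0) + N (col2 0 1)) * S ^+ 2
    = C * S ^+ 2 * N (col2 1 0) + C * S ^+ 2 * N (col2 0 1) by ring.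
by apply: lerD; apply: ler_wpM2r; rewrite ?isnorm_ge0 //;
  [apply: le_trans remx CS.1 | apply: le_trans remy CS.2].
Qed.

(* Since [N] dominates the [l1] norm, the quadratic remainder of
   [deviation_step_le] is [O(N (deviation x y) ^+ 2)] and is absorbed by
   half of the spectral gap [1 - lam] close to the equilibrium. *)
Lemma deviation_contraction (lam : R) : 0 < lam < 1 ->
  exists2 eta, 0 < eta & forall al be x y,
    0 <= 1 - al <= 1 -> 0 <= 1 - be <= 1 -> opnorm N (Jmat a b r s al be) <= lam ->
    N (deviation x y) <= eta ->
    N (deviation (x * ricker_factor al (r - x - a * y))
                 (y * ricker_factor be (s - b * x - y)))
    <= (1 + lam) / 2 * N (deviation x y).
Proof.
case/andP=> lam0 lam1.
have [m m0 mP] := isnorm_col2_ge hN.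
set C := 2 * (`|p| + `|q| + 1) * (N (col2 1 0) + N (col2 0 1)).
have C0 : 0 < C.
  apply: mulr_gt0 (isnorm_col2_basis_gt0 hN).
  have := normr_ge0 p; have := normr_ge0 q; lra.
have gap0 : 0 < 1 - lam by lra.
exists (Num.min (m / 2) ((1 - lam) * m ^+ 2 / (2 * C))).
  rewrite lt_min; apply/andP; split; apply: divr_gt0 => //; last lra.
  exact: mulr_gt0 gap0 (exprn_gt0 2 m0).
move=> al be x y hal hbe Jlam; set Nz := N (deviation x y).
rewrite le_min => /andP[Nz_m Nz_gap].
set S := `|x - p| + `|y - q|.
have SmN : S * m <= Nz by rewrite mulrC; apply: mP.
have S_small : S <= 1/2.
  rewrite -(ler_pM2r m0); apply: le_trans SmN (le_trans Nz_m _); lra.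
apply: le_trans (deviation_step_le hal hbe Jlam S_small) _.
rewrite -/Nz -/C -/S.
have Sm0 : 0 <= S * m by rewrite mulr_ge0 ?addr_ge0 // ltW.
have Sm2 : (S * m) ^+ 2 <= Nz * ((1 - lam) * m ^+ 2 / (2 * C)).
  by rewrite expr2; apply: ler_pM => //; exact: le_trans SmN Nz_gap.
have gap : C * S ^+ 2 <= (1 - lam) / 2 * Nz.
  rewrite -(ler_pM2r (exprn_gt0 2 m0)).
  have -> : C * S ^+ 2 * m ^+ 2 = C * (S * m) ^+ 2 by ring.
  apply: le_trans (ler_wpM2l (ltW C0) Sm2) _.
  have -> : C * (Nz * ((1 - lam) * m ^+ 2 / (2 * C))) = (1 - lam) / 2 * Nz * m ^+ 2.
    by field; rewrite gt_eqF.
  exact: lexx.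
lra.
Qed.

Lemma cvg_deviation0 (xs ys : R^nat) :
  (fun n => N (deviation (xs n) (ys n))) @ \oo --> 0 ->
  (fun n => (xs n, ys n)) @ \oo --> (p, q).
Proof.
move=> dev0; have [m m0 mP] := isnorm_col2_ge hN.
have dist_le (n : nat) : `|xs n - p| + `|ys n - q| <= N (deviation (xs n) (ys n)) / m.
  by rewrite ler_pdivlMr // mulrC; apply: mP.
have cvg_coord (zs : R^nat) z : (forall n, `|zs n - z| <= N (deviation (xs n) (ys n)) / m) ->
    zs @ \oo --> z.
  move=> zs_le; apply/subr_cvg0; apply: norm_cvg0.
  apply: (@squeeze_cvgr _ _ _ _ (cst 0) (fun n => N (deviation (xs n) (ys n)) / m)).
  - by near=> n; rewrite normr_ge0 zs_le.
  - exact: cvg_cst.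
  - by rewrite -(mul0r m^-1); apply: cvgM => //; exact: cvg_cst.
apply: (@cvg_pair _ _ _ _ (nbhs p) (nbhs q) _ _ _ xs ys); apply: cvg_coord => n;
  apply: le_trans (dist_le n).
  by rewrite lerDl.
by rewrite lerDr.
Unshelve. all: by end_near.
Qed.

Lemma local_stability (lam : R) : 0 < lam < 1 ->
  exists2 delta0, 0 < delta0 & forall xs ys als bes : R^nat,
    (forall n, 0 <= 1 - als n <= 1) -> (forall n, 0 <= 1 - bes n <= 1) ->
    (forall n, opnorm N (Jmat a b r s (als n) (bes n)) <= lam) ->
    (xs 0%N - p) ^+ 2 + (ys 0%N - q) ^+ 2 < delta0 ^+ 2 ->
    (forall n, xs n.+1 = xs n * ricker_factor (als n) (r - xs n - a * ys n)) ->
    (forall n, ys n.+1 = ys n * ricker_factor (bes n) (s - b * xs n - ys n)) ->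
    (fun n => (xs n, ys n)) @ \oo --> (p, q).
Proof.
move=> lam01; have [eta eta0 contract] := deviation_contraction lam01.
have M0 := isnorm_col2_basis_gt0 hN.
set M := N (col2 1 0) + N (col2 0 1) in M0.
exists (eta / M); first by rewrite divr_gt0.
move=> xs ys als bes hal hbe Jlam init xs_step ys_step.
apply: cvg_deviation0.
apply: (@geometric_cvg0 _ _ eta ((1 + lam) / 2)).
- by case/andP: lam01 => *; apply/andP; split; lra.
- by move=> n; apply: isnorm_ge0.
- have := isnorm_col2_lt_sqr hN (divr_gt0 eta0 M0) init.
  by rewrite divfK ?gt_eqF.
- by move=> n; rewrite xs_step ys_step; apply: contract.
Qed.

End LocalStability.

Unset Implicit Arguments.

Theorem mainTheorem11 (d : measure_display) (T : measurableType d)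
  (R : realType) (P : probability T R) (xi chi : nat -> T -> R)
  (a b r s al be l lb : R) :
  0 < a < 1 -> 0 < b < 1 -> a * s < r -> b * r < s ->
  assumption1 P xi chi ->
  0 <= al < 1 -> 0 <= be < 1 ->
  0 <= l < Num.min al (1 - al) -> 0 <= lb < Num.min be (1 - be) ->
  (exists (lam : R) (N : 'cV[R]_2 -> R),
     [/\ 0 < lam < 1, is_norm N &
       forall n : nat, {ae P, forall t,
         opnorm N (Jmat a b r s (al + l * xi n t) (be + lb * chi n t)) <= lam}]) ->
  exists delta0 : R, 0 < delta0 /\
    forall x y : nat -> T -> R,
      (forall t, (x 0%N t - Kp a b r s) ^+ 2 + (y 0%N t - Kq a b r s) ^+ 2
                 < delta0 ^+ 2) ->
      (forall n t, x n.+1 t = x n t * ((1 - al - l * xi n.+1 t)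
                     * expR (r - x n t - a * y n t) + al + l * xi n.+1 t)) ->
      (forall n t, y n.+1 t = y n t * ((1 - be - lb * chi n.+1 t)
                     * expR (s - b * x n t - y n t) + be + lb * chi n.+1 t)) ->
      {ae P, forall t,
        (fun n => (x n t, y n t)) @ \oo --> (Kp a b r s, Kq a b r s)}.
Proof.
move=> ha hb _ _ [_ _ _ _ noise_le1] _ _ hl hlb [lam [N [lam01 hN Jlam]]].
have [delta0 delta0_gt0 stable] := local_stability r s ha hb hN lam01.
exists delta0; split => // x y init x_step y_step.
have Jlam_ae := ae_foralln (fun n => Jlam n.+1).
near=> t.
apply: (stable _ _ (fun n => al + l * xi n.+1 t) (fun n => be + lb * chi n.+1 t)).
- by move=> n; apply: perturbed_weight_bounds hl (noise_le1 n.+1 t).1.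
- by move=> n; apply: perturbed_weight_bounds hlb (noise_le1 n.+1 t).2.
- by near: t.
- exact: init.
- by move=> n; rewrite x_step /ricker_factor; ring.
- by move=> n; rewrite y_step /ricker_factor; ring.
Unshelve. all: by end_near.
Qed.
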